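(* Let $f:\mathbb{R}^n\times\mathbb{R}^m\to\mathbb{R}$ be twice continuously differentiable, $\mu$-strongly convex in $x$ for every fixed $y$ and $\mu$-strongly concave in $y$ for every fixed $x$ ($\mu>0$). Write $z=(x;y)$ and $F(z)=(\nabla_x f(x,y);-\nabla_y f(x,y))$. Assume the largest singular value of the Jacobian $\nabla F(z)$ is at most $L$ for all $z$, and that $\|\nabla F(z)-\nabla F(z')\|\le L_2\|z-z'\|$ for all $z,z'$. Let $m(z)=\frac12\|F(z)\|^2$. Fix $z^0$, let $\mathcal{Z}=\{z: m(z)\le m(z^0)\}$ and $D=\max\{\|z-z^0\|: z\in\mathcal{Z}\}$. Then for all $z,z'\in\mathcal{Z}$, $$\|\nabla m(z)-\nabla m(z')\|\le L_m\|z-z'\|\qquad\text{with } L_m=L^2+L_2LD.$$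
   Context: $\|\cdot\|$ denotes the Euclidean norm for vectors and the largest singular value for matrices. $\nabla m(z)=\nabla F(z)^\top F(z)$. *)

From HB Require Import structures.
From mathcomp Require Import all_boot all_order all_algebra.
From mathcomp Require Import all_classical all_reals all_analysis.
Set Implicit Arguments. Unset Strict Implicit. Unset Printing Implicit Defensive.
Import Order.TTheory GRing.Theory Num.Theory.
Import numFieldNormedType.Exports.
Local Open Scope classical_set_scope.
Local Open Scope ring_scope.

Section Defs.
Variable R : realType.

Definition vnorm k (v : 'cV[R]_k) : R := Num.sqrt (\sum_i v i ord0 ^+ 2).

(* largest singular value = operator norm induced by the Euclidean norms *)
Definition opnorm p q (A : 'M[R]_(p, q)) : R :=
  sup [set vnorm (A *m v) | v in [set v : 'cV[R]_q | vnorm v <= 1]].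

Definition evec k (i : 'I_k) : 'cV[R]_k := delta_mx i ord0.

Definition pderiv k (g : 'cV[R]_k -> R) (i : 'I_k) (z : 'cV[R]_k) : R :=
  'D_(evec i) g z.

Definition C2 k (g : 'cV[R]_k -> R) : Prop :=
  (forall z, differentiable g z) /\
  (forall i z, differentiable (pderiv g i) z) /\
  (forall i j, continuous (pderiv (pderiv g i) j)).

Definition strongly_convex k (h : 'cV[R]_k -> R) (mu : R) : Prop :=
  forall (a b : 'cV[R]_k) (t : R), 0 <= t <= 1 ->
    h (t *: a + (1 - t) *: b) <=
      t * h a + (1 - t) * h b - mu / 2 * t * (1 - t) * vnorm (a - b) ^+ 2.

Variables n m : nat.
Implicit Type f : 'cV[R]_n -> 'cV[R]_m -> R.

Definition fz f (z : 'cV[R]_(n + m)) : R := f (usubmx z) (dsubmx z).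

(* F(z) = (grad_x f(x,y); - grad_y f(x,y)) *)
Definition Fop f (z : 'cV[R]_(n + m)) : 'cV[R]_(n + m) :=
  \col_(i < n + m) ((if fintype.split i is inl _ then 1 else -1) * pderiv (fz f) i z).

Definition JF f (z : 'cV[R]_(n + m)) : 'M[R]_(n + m) :=
  \matrix_(i, j) pderiv (fun w => Fop f w i ord0) j z.

Definition merit f (z : 'cV[R]_(n + m)) : R := 2^-1 * vnorm (Fop f z) ^+ 2.

(* nabla m(z) = nabla F(z)^T F(z) (as in the paper's context) *)
Definition gradm f (z : 'cV[R]_(n + m)) : 'cV[R]_(n + m) :=
  (JF f z)^T *m Fop f z.

End Defs.

(* Since grad m z - grad m z' = JF z^T (F z - F z') + (JF z - JF z')^T F z',
   it suffices that F is L-Lipschitz (mean value theorem along segments, using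
   the bound on JF) and that |F z'| <= L D on the sublevel set Z.  The first
   order characterisation of strong convexity/concavity makes F mu-strongly
   monotone, so Z is bounded, and the step w |-> w - eta F w with
   eta = mu / (L^2 + mu^2) shrinks |F|^2 by the factor 1 - mu eta while staying
   in Z.  Hence |F| takes arbitrarily small values on Z, and
   |F z'| <= |F z0| <= |F w| + L |w - z0| <= e + L D. *)

From HB Require Import structures.
From mathcomp Require Import all_boot all_order all_algebra.
From mathcomp Require Import all_classical all_reals all_analysis.
From mathcomp Require Import lra.
Set Implicit Arguments. Unset Strict Implicit. Unset Printing Implicit Defensive.
Import Order.TTheory GRing.Theory Num.Theory.
Import numFieldNormedType.Exports.
Local Open Scope classical_set_scope.
Local Open Scope ring_scope.

Section Euclidean.
Variable R : realType.
Implicit Types (k : nat) (c : R).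

Definition dotv k (u v : 'cV[R]_k) : R := \sum_i u i ord0 * v i ord0.

Lemma dotvC k (u v : 'cV[R]_k) : dotv u v = dotv v u.
Proof. by apply: eq_bigr => i _; rewrite mulrC. Qed.

Lemma dotvDl k (u u' v : 'cV[R]_k) : dotv (u + u') v = dotv u v + dotv u' v.
Proof. by rewrite /dotv -big_split; apply: eq_bigr => i _; rewrite mxE mulrDl. Qed.

Lemma dotvZl k c (u v : 'cV[R]_k) : dotv (c *: u) v = c * dotv u v.
Proof. by rewrite /dotv mulr_sumr; apply: eq_bigr => i _; rewrite mxE mulrA. Qed.

Lemma dotvNl k (u v : 'cV[R]_k) : dotv (- u) v = - dotv u v.
Proof. by rewrite -scaleN1r dotvZl mulN1r. Qed.

Lemma dotvBl k (u u' v : 'cV[R]_k) : dotv (u - u') v = dotv u v - dotv u' v.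
Proof. by rewrite dotvDl dotvNl. Qed.

Lemma dotvDr k (u v v' : 'cV[R]_k) : dotv u (v + v') = dotv u v + dotv u v'.
Proof. by rewrite dotvC dotvDl !(dotvC u). Qed.

Lemma dotvZr k c (u v : 'cV[R]_k) : dotv u (c *: v) = c * dotv u v.
Proof. by rewrite dotvC dotvZl dotvC. Qed.

Lemma dotvBr k (u v v' : 'cV[R]_k) : dotv u (v - v') = dotv u v - dotv u v'.
Proof. by rewrite !(dotvC u) dotvBl. Qed.

Lemma dotvv_ge0 k (v : 'cV[R]_k) : 0 <= dotv v v.
Proof. by apply: sumr_ge0 => i _; rewrite -expr2 sqr_ge0. Qed.

Lemma dotvv_eq0 k (v : 'cV[R]_k) : dotv v v = 0 -> v = 0.
Proof.
move=> /eqP; rewrite psumr_eq0 => [/allP v0|i _]; last by rewrite -expr2 sqr_ge0.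
apply/matrixP => i j; rewrite ord1 mxE.
by have /(_ (mem_index_enum _)) := v0 i; rewrite -expr2 sqrf_eq0 => /eqP.
Qed.

Lemma vnorm_ge0 k (v : 'cV[R]_k) : 0 <= vnorm v.
Proof. exact: sqrtr_ge0. Qed.

Lemma vnorm_sqr k (v : 'cV[R]_k) : vnorm v ^+ 2 = dotv v v.
Proof.
rewrite /vnorm sqr_sqrtr; last by apply: sumr_ge0 => i _; rewrite sqr_ge0.
by apply: eq_bigr => i _; rewrite expr2.
Qed.

Lemma vnorm_eq0 k (v : 'cV[R]_k) : vnorm v = 0 -> v = 0.
Proof. by move=> v0; apply: dotvv_eq0; rewrite -vnorm_sqr v0 expr0n. Qed.

Lemma vnormZ k c (v : 'cV[R]_k) : vnorm (c *: v) = `|c| * vnorm v.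
Proof.
rewrite /vnorm -sqrtr_sqr -sqrtrM ?sqr_ge0 // mulr_sumr; congr Num.sqrt.
by apply: eq_bigr => i _; rewrite mxE exprMn.
Qed.

Lemma vnormN k (v : 'cV[R]_k) : vnorm (- v) = vnorm v.
Proof. by rewrite -scaleN1r vnormZ normrN1 mul1r. Qed.

Lemma vnorm0 k : vnorm (0 : 'cV[R]_k) = 0.
Proof. by rewrite -(scale0r 0) vnormZ normr0 mul0r. Qed.

Lemma vnorm_col_mx k1 k2 (u : 'cV[R]_k1) (v : 'cV[R]_k2) :
  vnorm (col_mx u v) ^+ 2 = vnorm u ^+ 2 + vnorm v ^+ 2.
Proof.
by rewrite !vnorm_sqr /dotv big_split_ord; congr (_ + _);
  apply: eq_bigr => i _; rewrite ?col_mxEu ?col_mxEd.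
Qed.

(* Expanding [0 <= |b u - a v|^2] with [a = |u|], [b = |v|] gives
   [2 a b <u, v> <= 2 a^2 b^2]. *)
Lemma dotv_le k (u v : 'cV[R]_k) : dotv u v <= vnorm u * vnorm v.
Proof.
have [u0|/negPf u0] := eqVneq (vnorm u) 0.
  by rewrite (vnorm_eq0 u0) vnorm0 mul0r /dotv big1 // => i _; rewrite mxE mul0r.
have [v0|/negPf v0] := eqVneq (vnorm v) 0.
  by rewrite (vnorm_eq0 v0) vnorm0 mulr0 dotvC /dotv big1 // => i _; rewrite mxE mul0r.
have := dotvv_ge0 (vnorm v *: u - vnorm u *: v).
rewrite !(dotvBl, dotvBr, dotvZl, dotvZr) -!vnorm_sqr (dotvC v u).
have : 0 < vnorm u * vnorm v by rewrite mulr_gt0 // lt_def ?u0 ?v0 vnorm_ge0.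
rewrite !expr2; nra.
Qed.

Lemma vnormD_le k (u v : 'cV[R]_k) : vnorm (u + v) <= vnorm u + vnorm v.
Proof.
rewrite -ler_sqr ?nnegrE ?addr_ge0 ?vnorm_ge0 //.
rewrite vnorm_sqr dotvDl !dotvDr (dotvC v u) sqrrD !vnorm_sqr.
by have := dotv_le u v; lra.
Qed.

Lemma normr_dotv_le k (u v : 'cV[R]_k) : `|dotv u v| <= vnorm u * vnorm v.
Proof. by rewrite ler_norml dotv_le lerNl -dotvNl -[vnorm u]vnormN dotv_le. Qed.

End Euclidean.

Section OperatorNorm.
Variable R : realType.
Variables p q : nat.
Implicit Types (A B : 'M[R]_(p, q)).

Lemma opnorm_has_sup A :
  has_sup [set vnorm (A *m v) | v in [set v : 'cV[R]_q | vnorm v <= 1]].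
Proof.
split; first by exists (vnorm (A *m 0)), 0; rewrite //= vnorm0 ler01.
exists (Num.sqrt (\sum_i dotv (row i A)^T (row i A)^T)) => _ [v /= v1 <-].
rewrite -ler_sqr ?nnegrE ?vnorm_ge0 ?sqrtr_ge0 // vnorm_sqr sqr_sqrtr; last first.
  by apply: sumr_ge0 => i _; apply: dotvv_ge0.
apply: ler_sum => i _.
have rowE : (A *m v) i ord0 = dotv (row i A)^T v.
  by rewrite mxE; apply: eq_bigr => j _; rewrite !mxE.
rewrite rowE -expr2 -real_normK ?num_real //.
apply: le_trans (_ : (vnorm (row i A)^T * vnorm v) ^+ 2 <= _).
  by rewrite ler_sqr ?nnegrE ?normr_ge0 ?mulr_ge0 ?vnorm_ge0 ?normr_dotv_le.
by rewrite -vnorm_sqr exprMn ler_piMr ?sqr_ge0 ?exprn_ile1 ?vnorm_ge0.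
Qed.

Lemma opnorm_ge0 A : 0 <= opnorm A.
Proof.
apply: (sup_upper_bound (opnorm_has_sup A)).
by exists 0; rewrite /= ?mulmx0 vnorm0 ?ler01.
Qed.

Lemma vnorm_mulmx_le A v : vnorm (A *m v) <= opnorm A * vnorm v.
Proof.
have [v0|v0] := eqVneq (vnorm v) 0.
  by rewrite (vnorm_eq0 v0) mulmx0 !vnorm0 mulr0.
have vpos : 0 < vnorm v by rewrite lt_def v0 vnorm_ge0.
rewrite mulrC -ler_pdivrMl // -[(vnorm v)^-1]ger0_norm ?invr_ge0 ?vnorm_ge0 //.
rewrite -vnormZ scalemxAr; apply: (sup_upper_bound (opnorm_has_sup A)).
exists ((vnorm v)^-1 *: v) => //=.
by rewrite vnormZ ger0_norm ?invr_ge0 ?vnorm_ge0 // mulVf.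
Qed.

Lemma dotv_trmx_mulmx A (w : 'cV[R]_p) (v : 'cV[R]_q) :
  dotv (A^T *m w) v = dotv w (A *m v).
Proof.
rewrite /dotv; under eq_bigr => j _ do rewrite mxE mulr_suml.
rewrite exchange_big /=; apply: eq_bigr => i _.
by rewrite mxE mulr_sumr; apply: eq_bigr => j _; rewrite mxE mulrCA mulrA.
Qed.

(* [|A^T w|^2 = <w, A (A^T w)> <= |w| |A| |A^T w|]. *)
Lemma vnorm_trmx_mulmx_le A (w : 'cV[R]_p) : vnorm (A^T *m w) <= opnorm A * vnorm w.
Proof.
set x := A^T *m w.
have [x0|x0] := eqVneq (vnorm x) 0; first by rewrite x0 mulr_ge0 ?opnorm_ge0 ?vnorm_ge0.
have xpos : 0 < vnorm x by rewrite lt_def x0 vnorm_ge0.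
rewrite -(ler_pM2l xpos) -expr2 vnorm_sqr {1}/x dotv_trmx_mulmx.
apply: le_trans (dotv_le _ _) _.
rewrite mulrC mulrA [vnorm x * _]mulrC ler_wpM2r ?vnorm_ge0 //.
exact: vnorm_mulmx_le.
Qed.

Lemma vnorm_trmx_mulmxB_le A B (u v : 'cV[R]_p) :
  vnorm (A^T *m u - B^T *m v) <= opnorm A * vnorm (u - v) + opnorm (A - B) * vnorm v.
Proof.
have -> : A^T *m u - B^T *m v = A^T *m (u - v) + (A - B)^T *m v.
  by rewrite [(A - B)^T]linearB /= mulmxBl mulmxBr addrA subrK.
by apply: le_trans (vnormD_le _ _) _; rewrite lerD ?vnorm_trmx_mulmx_le.
Qed.

End OperatorNorm.

Section Derivatives.
Variable R : realType.

Lemma is_derive_comp_affine (U V W : normedModType R) (g : V -> W) (p : U -> V)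
    (x u : U) (w : V) :
  (forall h : R, p (h *: u + x) = h *: w + p x) ->
  derivable g (p x) w -> is_derive x u (g \o p) ('D_w g (p x)).
Proof.
move=> pE dg.
have quotE : (fun h : R => h^-1 *: ((g \o p \o shift x) (h *: u) - (g \o p) x)) =
    (fun h : R => h^-1 *: ((g \o shift (p x)) (h *: w) - g (p x))).
  by apply: funext => h /=; rewrite pE.
by split; rewrite /derivable /derive quotE.
Qed.

Lemma derive_sum_pderiv k (g : 'cV[R]_k -> R) z v : differentiable g z ->
  'D_v g z = \sum_j v j ord0 * pderiv g j z.
Proof.
move=> dg; rewrite deriveE // {1}(matrix_sum_delta v) linear_sum.
by apply: eq_bigr => j _; rewrite big_ord1 linearZ /= /pderiv deriveE.
Qed.

(* The difference quotients [(h (a + s u) - h a) / s] are bounded by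
   [C - K (1 - s)] for [0 < s < 1], and tend to [d] as [s -> 0+]. *)
Lemma is_derive_strongly_convex_le k (h : 'cV[R]_k -> R) mu a u d :
  0 <= mu -> strongly_convex h mu -> is_derive a u h d ->
  d <= h (u + a) - h a - mu / 2 * vnorm u ^+ 2.
Proof.
move=> mu0 hconv [dh <-].
set C := h (u + a) - h a; set K := mu / 2 * vnorm u ^+ 2.
have K0 : 0 <= K by rewrite mulr_ge0 ?divr_ge0 ?sqr_ge0.
pose quot := fun s : R => s^-1 *: ((h \o shift a) (s *: u) - h a).
have quot_le s : 0 < s < 1 -> quot s <= C - K + K * s.
  case/andP=> s0 s1; rewrite /quot /= -[_ *: _]/(s^-1 * _) ler_pdivrMl //.
  have s01 : 0 <= s <= 1 by rewrite !ltW.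
  have := hconv (u + a) a s s01.
  have -> : s *: (u + a) + (1 - s) *: a = s *: u + a.
    by rewrite scalerDr scalerBl scale1r addrACA subrr addr0 addrC.
  by rewrite [u + a - a]addrK /C /K; nra.
have quot_cvg : quot @ 0^'+ --> 'D_u h a.
  move=> A /dh /nbhs_ballP [_ /posnumP[e] eA].
  by exists e%:num => //= s es /gt_eqF/negbT/eA; exact.
apply/ler_addgt0Pr => e e0.
apply: (cvgr_to_le quot_cvg); near=> s.
have s0 : 0 < s by near: s; exact: nbhs_right_gt.
have s1 : s < 1 by near: s; exact: nbhs_right_lt.
have se : s < e / (K + 1) by near: s; apply: nbhs_right_lt; rewrite divr_gt0 // ltr_wpDl.
apply: le_trans (quot_le s _) _; first by rewrite s0.
rewrite lerD2l; move: se; rewrite ltr_pdivlMr ?ltr_wpDl //; nra.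
Unshelve. all: by end_near.
Qed.

End Derivatives.

Section Jacobian.
Variable R : realType.
Variables p q : nat.
Variable G : 'cV[R]_p -> 'cV[R]_q.
Hypothesis dG : forall i z, differentiable (fun w => G w i ord0) z.

Definition jacobian z : 'M[R]_(q, p) :=
  \matrix_(i, j) pderiv (fun w => G w i ord0) j z.

Lemma derive_jacobian i z v :
  'D_v (fun w => G w i ord0) z = (jacobian z *m v) i ord0.
Proof.
rewrite derive_sum_pderiv // mxE.
by apply: eq_bigr => j _; rewrite mxE mulrC.
Qed.

(* Mean value theorem for [s |-> <G b - G a, G (a + s (b - a))>] on [0, 1]. *)
Lemma jacobian_bounded_lipschitz L a b : (forall z, opnorm (jacobian z) <= L) ->
  vnorm (G b - G a) <= L * vnorm (b - a).
Proof.
move=> JL; set d := G b - G a; set v := b - a.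
pose line s := s *: v + a.
pose phi := \sum_i (fun s => d i ord0 * G (line s) i ord0).
have phiE s : phi s = dotv d (G (line s)) by rewrite /phi fct_sumE.
have phi' (t : R) : is_derive t (1 : R) phi (dotv d (jacobian (line t) *m v)).
  apply: is_derive_eq.
    apply: is_derive_sum => i; apply: is_deriveZ.
    apply: (is_derive_comp_affine (g := fun w => G w i ord0) (w := v)).
      by move=> h; rewrite /line -[h%:A]/(h * 1) mulr1 scalerDl addrA.
    exact/diff_derivable.
  by apply: eq_bigr => i _; rewrite derive_jacobian.
have phi_cont : {within `[0, 1], continuous phi}.
  by apply: derivable_within_continuous => t _; case: (phi' t).
have [c _] := MVT ltr01 (fun t _ => phi' t) phi_cont.
rewrite !phiE subr0 mulr1 -dotvBr /line scale1r scale0r add0r subrK -/d => dd.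
have L_ge0 : 0 <= L := le_trans (opnorm_ge0 _) (JL a).
have [d0|d0] := eqVneq (vnorm d) 0; first by rewrite d0 mulr_ge0 ?vnorm_ge0.
have dpos : 0 < vnorm d by rewrite lt_def d0 vnorm_ge0.
rewrite -(ler_pM2l dpos) -expr2 vnorm_sqr dd; apply: le_trans (dotv_le _ _) _.
rewrite ler_wpM2l ?vnorm_ge0 //; apply: le_trans (vnorm_mulmx_le _ _) _.
by rewrite ler_wpM2r ?vnorm_ge0.
Qed.

End Jacobian.

Lemma split_lshift m n (i : 'I_m) : fintype.split (lshift n i) = inl i.
Proof. exact: (unsplitK (inl i)). Qed.

Lemma split_rshift m n (i : 'I_n) : fintype.split (rshift m i) = inr i.
Proof. exact: (unsplitK (inr i)). Qed.

Section SaddleOperator.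
Variable R : realType.
Variables n m : nat.
Variable f : 'cV[R]_n -> 'cV[R]_m -> R.
Hypothesis f_C2 : C2 (fz f).

Lemma fz_differentiable z : differentiable (fz f) z.
Proof. by case: f_C2. Qed.

Lemma Fop_component_differentiable i z : differentiable (fun w => Fop f w i ord0) z.
Proof.
have -> : (fun w => Fop f w i ord0) =
    (if fintype.split i is inl _ then 1 else -1) \*: pderiv (fz f) i.
  by apply: funext => w; rewrite mxE.
by apply: differentiableZ; case: f_C2 => _ [].
Qed.

Lemma Fop_lipschitz L a b : (forall z, opnorm (JF f z) <= L) ->
  vnorm (Fop f b - Fop f a) <= L * vnorm (b - a).
Proof. exact: (jacobian_bounded_lipschitz Fop_component_differentiable). Qed.

Lemma dotv_Fop w z : dotv w (Fop f z) =
  'D_(col_mx (usubmx w) 0) (fz f) z - 'D_(col_mx 0 (dsubmx w)) (fz f) z.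
Proof.
have dfz := fz_differentiable z.
rewrite !derive_sum_pderiv // /dotv !big_split_ord /=.
rewrite [X in _ = _ + X - _]big1 => [|i _]; last by rewrite col_mxEd mxE mul0r.
rewrite [X in _ = _ - (X + _)]big1 => [|i _]; last by rewrite col_mxEu mxE mul0r.
rewrite addr0 add0r -sumrN; congr (_ + _); apply: eq_bigr => i _.
  by rewrite col_mxEu !mxE split_lshift mul1r.
by rewrite col_mxEd !mxE split_rshift mulN1r mulrN.
Qed.

Lemma is_derive_partial_x z u :
  is_derive (usubmx z) u (fun x => f x (dsubmx z)) ('D_(col_mx u 0) (fz f) z).
Proof.
have fE : (fun x => f x (dsubmx z)) = fz f \o (fun x => col_mx x (dsubmx z)).
  by apply: funext => x; rewrite /fz /= col_mxKu col_mxKd.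
have pE (h : R) : col_mx (h *: u + usubmx z) (dsubmx z) =
    h *: col_mx u 0 + col_mx (usubmx z) (dsubmx z).
  by rewrite scale_col_mx add_col_mx scaler0 add0r.
have := is_derive_comp_affine (p := fun x => col_mx x (dsubmx z)) (x := usubmx z)
  pE (diff_derivable (fz_differentiable _)).
by rewrite vsubmxK fE.
Qed.

Lemma is_derive_partial_y z u :
  is_derive (dsubmx z) u (fun y => f (usubmx z) y) ('D_(col_mx 0 u) (fz f) z).
Proof.
have fE : (fun y => f (usubmx z) y) = fz f \o (fun y => col_mx (usubmx z) y).
  by apply: funext => y; rewrite /fz /= col_mxKu col_mxKd.
have pE (h : R) : col_mx (usubmx z) (h *: u + dsubmx z) =
    h *: col_mx 0 u + col_mx (usubmx z) (dsubmx z).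
  by rewrite scale_col_mx add_col_mx scaler0 add0r.
have := is_derive_comp_affine (p := fun y => col_mx (usubmx z) y) (x := dsubmx z)
  pE (diff_derivable (fz_differentiable _)).
by rewrite vsubmxK fE.
Qed.

Variable mu : R.
Hypothesis mu_ge0 : 0 <= mu.
Hypothesis f_convex : forall y, strongly_convex (fun x => f x y) mu.
Hypothesis f_concave : forall x, strongly_convex (fun y => - f x y) mu.

Lemma dotv_Fop_le a b : dotv (b - a) (Fop f a) <=
  f (usubmx b) (dsubmx a) - f (usubmx a) (dsubmx b) - mu / 2 * vnorm (b - a) ^+ 2.
Proof.
rewrite dotv_Fop; set ux := usubmx (b - a); set uy := dsubmx (b - a).
have hx := is_derive_strongly_convex_le mu_ge0 (f_convex _)
  (is_derive_partial_x a ux).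
have hy := is_derive_strongly_convex_le mu_ge0 (f_concave _)
  (is_deriveN (is_derive_partial_y a uy)).
have uxE : ux + usubmx a = usubmx b by rewrite /ux linearB /= subrK.
have uyE : uy + dsubmx a = dsubmx b by rewrite /uy linearB /= subrK.
have normE : vnorm (b - a) ^+ 2 = vnorm ux ^+ 2 + vnorm uy ^+ 2.
  by rewrite -vnorm_col_mx vsubmxK.
rewrite uxE in hx; rewrite uyE in hy; rewrite normE; lra.
Qed.

Lemma Fop_strongly_monotone a b :
  mu * vnorm (b - a) ^+ 2 <= dotv (b - a) (Fop f b - Fop f a).
Proof.
have hab := dotv_Fop_le a b; have hba := dotv_Fop_le b a.
rewrite -opprB dotvNl -[vnorm (- _)]vnormN opprK in hba.
rewrite dotvBr; lra.
Qed.

End SaddleOperator.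

(* If [c = inf g > 0], a point with [g w < (2 - q) c] would be sent below [c]. *)
Lemma contracting_step_small_value (R : realType) (T : Type) (S : set T) (g : T -> R)
    (s : T -> T) (q : R) (w0 : T) :
  S w0 -> 0 <= q < 1 -> (forall w, S w -> 0 <= g w) ->
  (forall w, S w -> S (s w) /\ g (s w) <= q * g w) ->
  forall e, 0 < e -> exists2 w, S w & g w < e.
Proof.
move=> Sw0 /andP[q0 q1] g_ge0 step e e0.
have inf_g : has_inf [set g w | w in S].
  by split; [exists (g w0), w0 | exists 0 => _ [w Sw <-]; exact: g_ge0].
have inf_le0 : inf [set g w | w in S] <= 0.
  rewrite leNgt; apply/negP => c0; set c := inf _ in c0.
  have gap : 0 < c * (1 - q) by rewrite mulr_gt0 // subr_gt0.
  have [_ [w Sw <-] gw] := inf_adherent gap inf_g.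
  have [Ssw gsw] := step w Sw.
  have : c <= g (s w) by apply: (ge_inf (proj2 inf_g)); exists (s w).
  by have := g_ge0 w Sw; nra.
have [_ [w Sw <-] gw] := inf_adherent e0 inf_g.
by exists w => //; lra.
Qed.

Section MonotoneLipschitzOperator.
Variable R : realType.
Variable k : nat.
Variable G : 'cV[R]_k -> 'cV[R]_k.
Variables L mu : R.
Hypothesis L_ge0 : 0 <= L.
Hypothesis mu_gt0 : 0 < mu.
Hypothesis G_lipschitz : forall a b, vnorm (G b - G a) <= L * vnorm (b - a).
Hypothesis G_monotone :
  forall a b, mu * vnorm (b - a) ^+ 2 <= dotv (b - a) (G b - G a).
Variable z0 : 'cV[R]_k.

Local Notation sublevel := [set w | vnorm (G w) <= vnorm (G z0)].

Lemma sublevel_bounded w : sublevel w ->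
  vnorm (w - z0) <= 2 * vnorm (G z0) / mu.
Proof.
move=> /= Gw; rewrite ler_pdivlMr //.
have [->|w0] := eqVneq (vnorm (w - z0)) 0; first by rewrite mul0r mulr_ge0 ?vnorm_ge0.
have wpos : 0 < vnorm (w - z0) by rewrite lt_def w0 vnorm_ge0.
have dG : vnorm (G w - G z0) <= 2 * vnorm (G z0).
  by apply: le_trans (vnormD_le _ _) _; rewrite vnormN; lra.
rewrite -(ler_pM2l wpos) mulrA -expr2 mulrC.
apply: le_trans (G_monotone z0 w) _; apply: le_trans (dotv_le _ _) _.
by rewrite ler_wpM2l ?vnorm_ge0.
Qed.

Lemma residual_descent eta w : 0 < eta -> L ^+ 2 * eta <= mu ->
  vnorm (G (w - eta *: G w)) ^+ 2 <= (1 - mu * eta) * vnorm (G w) ^+ 2.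
Proof.
move=> eta_gt0 L2_eta_le.
set d := G (w - eta *: G w) - G w.
have stepE : w - eta *: G w - w = - (eta *: G w) by rewrite addrAC subrr add0r.
have mono := G_monotone w (w - eta *: G w); have lip := G_lipschitz w (w - eta *: G w).
rewrite -/d stepE dotvNl dotvZl vnormN vnormZ gtr0_norm // exprMn in mono.
rewrite -/d stepE vnormN vnormZ gtr0_norm // mulrA in lip.
have dotGd : dotv (G w) d <= - (mu * eta) * vnorm (G w) ^+ 2.
  by rewrite -(ler_pM2l eta_gt0); lra.
have d2 : vnorm d ^+ 2 <= L ^+ 2 * eta ^+ 2 * vnorm (G w) ^+ 2.
  by rewrite -!exprMn ler_sqr ?nnegrE ?vnorm_ge0 ?mulr_ge0 ?vnorm_ge0 ?(ltW eta_gt0).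
have -> : G (w - eta *: G w) = G w + d by rewrite /d [G w + _]addrC subrK.
clearbody d; rewrite vnorm_sqr dotvDl !dotvDr (dotvC d) -!vnorm_sqr.
have : L ^+ 2 * eta ^+ 2 * vnorm (G w) ^+ 2 <= mu * eta * vnorm (G w) ^+ 2.
  by rewrite ler_wpM2r ?sqr_ge0 // expr2 mulrA ler_wpM2r // ltW.
lra.
Qed.

Lemma sublevel_small_residual e : 0 < e -> exists2 w, sublevel w & vnorm (G w) < e.
Proof.
(* The [mu ^+ 2] in the denominator keeps [eta > 0] and [mu * eta <= 1] when [L = 0]. *)
move=> e_gt0; pose eta := mu / (L ^+ 2 + mu ^+ 2).
have den_gt0 : 0 < L ^+ 2 + mu ^+ 2 by rewrite ltr_wpDl ?sqr_ge0 ?exprn_gt0.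
have eta_gt0 : 0 < eta by rewrite divr_gt0.
have L2_eta : L ^+ 2 * eta <= mu.
  by rewrite mulrA ler_pdivrMr // mulrC ler_wpM2l ?(ltW mu_gt0) // lerDl sqr_ge0.
have mu_eta : 0 < mu * eta <= 1.
  by rewrite mulr_gt0 //= mulrA ler_pdivrMr // mul1r -expr2 lerDr sqr_ge0.
have q01 : 0 <= 1 - mu * eta < 1 by lra.
have step w : sublevel w -> sublevel (w - eta *: G w) /\
    vnorm (G (w - eta *: G w)) ^+ 2 <= (1 - mu * eta) * vnorm (G w) ^+ 2.
  move=> Sw; have descent := residual_descent w eta_gt0 L2_eta; split => //.
  rewrite /= -ler_sqr ?nnegrE ?vnorm_ge0 //.
  apply: le_trans descent (le_trans (_ : _ <= vnorm (G w) ^+ 2) _).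
    by rewrite ler_piMl ?sqr_ge0 //; lra.
  by rewrite ler_sqr ?nnegrE ?vnorm_ge0.
have [w Sw Gw] := contracting_step_small_value (g := fun w => vnorm (G w) ^+ 2)
  (s := fun w => w - eta *: G w) (lexx (vnorm (G z0))) q01
  (fun w _ => sqr_ge0 (vnorm (G w))) step (exprn_gt0 2 e_gt0).
by exists w; rewrite // -ltr_sqr ?nnegrE ?vnorm_ge0 ?ltW.
Qed.

Lemma residual_le_sublevel_radius :
  vnorm (G z0) <= L * sup [set vnorm (w - z0) | w in sublevel].
Proof.
have diam_sup : has_sup [set vnorm (w - z0) | w in sublevel].
  split; first by exists (vnorm (z0 - z0)), z0 => /=.
  by exists (2 * vnorm (G z0) / mu) => _ [w Sw <-]; exact: sublevel_bounded.
apply/ler_addgt0Pr => e e_gt0.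
have [w Sw Gw] := sublevel_small_residual e_gt0.
have wD : L * vnorm (w - z0) <= L * sup [set vnorm (w - z0) | w in sublevel].
  by rewrite ler_wpM2l //; apply: (sup_upper_bound diam_sup); exists w.
have := G_lipschitz w z0; rewrite -[z0 - w]opprB vnormN.
have := vnormD_le (G z0 - G w) (G w); rewrite subrK.
lra.
Qed.

End MonotoneLipschitzOperator.

Lemma merit_le (R : realType) n m (f : 'cV[R]_n -> 'cV[R]_m -> R) z z' :
  (merit f z <= merit f z') = (vnorm (Fop f z) <= vnorm (Fop f z')).
Proof. by rewrite /merit ler_pM2l ?invr_gt0 ?ltr0n // ler_sqr ?nnegrE ?vnorm_ge0. Qed.

Theorem lemma2p4 (R : realType) (n m : nat)
    (f : 'cV[R]_n -> 'cV[R]_m -> R) (mu L L2 : R) (z0 : 'cV[R]_(n + m)) :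
  0 < mu ->
  C2 (fz f) ->
  (forall y, strongly_convex (fun x => f x y) mu) ->
  (forall x, strongly_convex (fun y => - f x y) mu) ->
  (forall z, opnorm (JF f z) <= L) ->
  (forall z z', opnorm (JF f z - JF f z') <= L2 * vnorm (z - z')) ->
  let Z := [set z | merit f z <= merit f z0] in
  let D := sup [set vnorm (z - z0) | z in Z] in
  forall z z', Z z -> Z z' ->
    vnorm (gradm f z - gradm f z') <= (L ^+ 2 + L2 * L * D) * vnorm (z - z').
Proof.
move=> mu_gt0 f_C2 f_convex f_concave JF_le JF_lip Z D z z' Zz Zz'.
have L_ge0 : 0 <= L := le_trans (opnorm_ge0 _) (JF_le z0).
have F_lip a b := Fop_lipschitz f_C2 a b JF_le.
have F_mono := Fop_strongly_monotone f_C2 (ltW mu_gt0) f_convex f_concave.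
have ZE : Z = [set w | vnorm (Fop f w) <= vnorm (Fop f z0)].
  by apply/seteqP; split => w; rewrite /Z /= merit_le.
have Fz0_le : vnorm (Fop f z0) <= L * D.
  by have := residual_le_sublevel_radius L_ge0 mu_gt0 F_lip F_mono z0; rewrite -ZE.
have Fz'_le : vnorm (Fop f z') <= L * D.
  by apply: le_trans Fz0_le; move: Zz'; rewrite ZE.
apply: le_trans (vnorm_trmx_mulmxB_le _ _ _ _) _.
have JdF_le := ler_pM (opnorm_ge0 _) (vnorm_ge0 _) (JF_le z) (F_lip z' z).
have dJF_le := ler_pM (opnorm_ge0 _) (vnorm_ge0 _) (JF_lip z z') Fz'_le.
apply: le_trans (lerD JdF_le dJF_le) _; lra.
Qed.
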